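(* Let $P^{(1)},\dots,P^{(m)}$ be phase-free $n$-qubit Pauli strings given in sparse form, with weights $w_i=\operatorname{wt}(P^{(i)})$. In the computational model where dictionary lookup and update for a key of length $r$ cost $O(r)$ expected time, the locality-zeta counting algorithm (which for $i=1,\dots,m$ computes $c_i=(N-Z)/2$ with $Z=\sum_{A\subseteq\operatorname{supp}(P^{(i)})}(-2)^{|A|}\sum_{a\in\mathcal{L}_{P^{(i)}}(A)}D[(A,a)]$, adds $c_i$ to a running total, then increments $D[(A,P^{(i)}|_A)]$ for every $A\subseteq\operatorname{supp}(P^{(i)})$ and increments $N$; and returns the total, which is the number of unordered anticommuting pairs) runs in expected time \[ O\Big(\sum_{i=1}^m w_i3^{w_i}\Big) \] and uses space $O\big(\sum_{i=1}^m w_i2^{w_i}\big)$ for dictionary keys in addition to the input storage. In particular, if $w_i\le k$ for all $i$, the expected time is $O(mk3^k)$ and the additional space is $O(mk2^k)$.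
   Context: A phase-free $n$-qubit Pauli string is $P=(P_1,\dots,P_n)\in\{I,X,Y,Z\}^n$, stored sparsely as the pairs $(j,P_j)$, $j\in\operatorname{supp}(P)=\{j:P_j\neq I\}$; $\operatorname{wt}(P)=|\operatorname{supp}(P)|$. $D$ is a dictionary (initially empty, absent keys count as zero) with keys labeled patterns $(A,a)$, $A$ a set of positions, $a:A\to\{X,Y,Z\}$, of length $|A|$; $N$ starts at $0$. $\mathcal{L}_P(A)=\{a:A\to\{X,Y,Z\}: a(j)\neq P_j\ \forall j\in A\}$, and $P|_A$ is the labeling $j\mapsto P_j$ on $A$. *)

From HB Require Import structures.
From mathcomp Require Import all_boot all_order all_algebra.
Set Implicit Arguments. Unset Strict Implicit. Unset Printing Implicit Defensive.
Import Order.TTheory GRing.Theory Num.Theory.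

Inductive pauli1 := PX | PY | PZ.

Definition pauli1_code (p : pauli1) : 'I_3 :=
  match p with PX => inord 0 | PY => inord 1 | PZ => inord 2 end.
Definition pauli1_decode (i : 'I_3) : pauli1 :=
  match val i with 0 => PX | 1 => PY | _ => PZ end.
Lemma pauli1_codeK : cancel pauli1_code pauli1_decode.
Proof. by case; rewrite /pauli1_decode /= inordK. Qed.
HB.instance Definition _ := Equality.copy pauli1 (can_type pauli1_codeK).

(* A phase-free Pauli string in sparse form: list of pairs (j, P_j), P_j <> I. *)
Definition spauli := seq (nat * pauli1).

Definition wf_spauli (n : nat) (P : spauli) : bool :=
  uniq (map fst P) && all (fun q => q.1 < n) P.

Definition wt (P : spauli) : nat := size P.

(* All sub-lists of s: subsets A of supp(P), each represented together
   with the restriction P|_A. *)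
Fixpoint subseqs (T : Type) (s : seq T) : seq (seq T) :=
  match s with
  | [::] => [:: [::]]
  | x :: s' => let r := subseqs s' in r ++ map (cons x) r
  end.

Definition others (p : pauli1) : seq pauli1 :=
  filter (fun q => q != p) [:: PX; PY; PZ].

(* labelings in L_P(A), given PA = P|_A *)
Fixpoint labelings (PA : spauli) : seq spauli :=
  match PA with
  | [::] => [:: [::]]
  | (j, p) :: s' => [seq (j, q) :: l | q <- others p, l <- labelings s']
  end.

(* canonical representation of a labeled pattern (A, a) as a dictionary key *)
Definition key (l : spauli) : spauli := sort (fun x y => x.1 <= y.1) l.

Record alg_state := AlgState {
  st_D : spauli -> int;       (* the dictionary D (absent keys = 0) *)
  st_keys : seq spauli;       (* keys ever inserted into D *)
  st_N : int;
  st_total : int;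
  st_time : nat
}.

Definition init_state : alg_state := AlgState (fun _ => 0%R) [::] 0%R 0%R 0.

Definition incr (D : spauli -> int) (k : spauli) : spauli -> int :=
  fun k' => if k' == k then (D k' + 1)%R else D k'.

(* Cost model: each dictionary lookup/update on a key of length r costs r+1,
   generating a subset / labeling of length r costs r+1, and each
   arithmetic/bookkeeping step costs 1 (absorbed in these charges). *)
Definition alg_step (s : alg_state) (P : spauli) : alg_state :=
  let D := st_D s in
  let Z : int := (\sum_(A <- subseqs P)
                   (-2) ^+ size A * \sum_(a <- labelings A) D (key a))%R in
  let costZ := \sum_(A <- subseqs P)
                 ((size A).+1 + \sum_(a <- labelings A) ((size A).+1 + (size A).+1)) in
  let c : int := ((st_N s - Z) %/ 2)%Z in
  let D' := foldl (fun D0 A => incr D0 (key A)) D (subseqs P) in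
  let costU := \sum_(A <- subseqs P) ((size A).+1 + (size A).+1) in
  AlgState D' (st_keys s ++ map key (subseqs P)) (st_N s + 1)%R
           (st_total s + c)%R (st_time s + costZ + costU + 1).

Definition run_alg (Ps : seq spauli) : alg_state := foldl alg_step init_state Ps.

Definition alg_time (s : alg_state) : nat := st_time s.
Definition alg_result (s : alg_state) : int := st_total s.
Definition alg_space (s : alg_state) : nat :=
  \sum_(k <- undup (st_keys s)) (size k).+1.

(* Processing a string P of weight w visits the 2^w subsets A of its support;
   for each it looks up the 2^|A| labelings in L_P(A) and updates one key,
   every dictionary access costing O(|A| + 1) <= O(w + 1).  Since
   sum_A 2^|A| = 3^w by the binomial theorem, one step costs O((w + 1) 3^w),
   and it inserts 2^w keys of length at most w. *)

From mathcomp Require Import all_boot all_order all_algebra.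
From mathcomp Require Import zify.

Set Implicit Arguments. Unset Strict Implicit.

Lemma sum_nat_const_seq (T : Type) (s : seq T) (c : nat) :
  \sum_(x <- s) c = size s * c.
Proof. by rewrite big_const_seq count_predT iter_addn_0 mulnC. Qed.

Lemma sum_undup_leq (T : eqType) (s : seq T) (f : T -> nat) :
  \sum_(x <- undup s) f x <= \sum_(x <- s) f x.
Proof.
by apply: (@sub_le_big_seq _ addn _ leqnn (fun m n => leq_addr n m)) => x;
  exact: count_undup.
Qed.

Lemma sum_homo_leq (T : Type) (s : seq T) (f : T -> nat) (F : nat -> nat) k :
  {homo F : x y / x <= y} -> all (fun x => f x <= k) s ->
  \sum_(x <- s) F (f x) <= size s * F k.
Proof.
move=> F_homo; rewrite -sum_nat_const_seq.
elim: s => [|x s IHs] /=; first by rewrite !big_nil.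
by case/andP=> fx_le /IHs; rewrite !big_cons; apply/leq_add/F_homo.
Qed.

Lemma homo_maxn1_mul_exp b : 0 < b -> {homo (fun w => maxn 1 w * b ^ w) : x y / x <= y}.
Proof.
move=> b_gt0 x y le_xy; apply: leq_mul; last by rewrite leq_pexp2l.
by rewrite geq_max leq_maxl (leq_trans le_xy) ?leq_maxr.
Qed.

Lemma succn_mul_leq_maxn1 w x : w.+1 * x <= 2 * (maxn 1 w * x).
Proof. by rewrite mulnA leq_mul2r; apply/orP; right; lia. Qed.

Lemma sum_subseqs_exp (T : Type) (s : seq T) c :
  \sum_(A <- subseqs s) c ^ size A = c.+1 ^ size s.
Proof.
elim: s => [|x s IHs] /=; first by rewrite big_seq1.
rewrite big_cat big_map /=.
under [X in _ + X]eq_bigr do rewrite expnS.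
by rewrite -big_distrr /= IHs expnS mulSn addnC.
Qed.

Lemma size_subseqs (T : Type) (s : seq T) : size (subseqs s) = 2 ^ size s.
Proof.
by rewrite -sum_subseqs_exp -sum1_size; apply: eq_bigr => A _; rewrite exp1n.
Qed.

Lemma subseq_subseqs (T : eqType) (s A : seq T) : A \in subseqs s -> subseq A s.
Proof.
elim: s A => [|x s IHs] A /=; first by rewrite mem_seq1 => /eqP ->.
rewrite mem_cat => /orP[/IHs sub_As | /mapP[A' /IHs sub_A's ->]].
  exact: subseq_trans sub_As (subseq_cons s x).
by rewrite /= eqxx.
Qed.

Lemma size_subseqs_leq (T : eqType) (s A : seq T) : A \in subseqs s -> size A <= size s.
Proof. by move/subseq_subseqs/size_subseq. Qed.

Lemma size_others p : size (others p) = 2.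
Proof. by case: p; rewrite /others /= /eq_op /= -!val_eqE /= !inordK. Qed.

Lemma size_labelings (A : spauli) : size (labelings A) = 2 ^ size A.
Proof.
elim: A => [|[j p] A IHA] //=.
rewrite size_flatten /shape -map_comp sumnE big_map.
under eq_bigr do rewrite /= size_map IHA.
by rewrite sum_nat_const_seq size_others expnS.
Qed.

Definition step_time (P : spauli) : nat :=
  \sum_(A <- subseqs P)
     ((size A).+1 + \sum_(a <- labelings A) ((size A).+1 + (size A).+1)) +
  \sum_(A <- subseqs P) ((size A).+1 + (size A).+1) + 1.

Lemma alg_time_foldl s Ps :
  st_time (foldl alg_step s Ps) = st_time s + \sum_(P <- Ps) step_time P.
Proof.
elim: Ps s => [|P Ps IHPs] s /=; first by rewrite big_nil addn0.
by rewrite IHPs big_cons !addnA.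
Qed.

Definition subset_cost (A : spauli) : nat :=
  let r := (size A).+1 in r + \sum_(a <- labelings A) (r + r) + (r + r).

Lemma step_timeE P : step_time P = (\sum_(A <- subseqs P) subset_cost A).+1.
Proof. by rewrite /step_time -big_split addn1. Qed.

Lemma subset_cost_le A : subset_cost A <= 5 * ((size A).+1 * 2 ^ size A).
Proof.
rewrite /subset_cost sum_nat_const_seq size_labelings.
have := expn_gt0 2 (size A); nia.
Qed.

Lemma step_time_le P : step_time P <= 6 * ((wt P).+1 * 3 ^ wt P).
Proof.
have sum_le : \sum_(A <- subseqs P) subset_cost A <= 5 * ((wt P).+1 * 3 ^ wt P).
  rewrite -sum_subseqs_exp !big_distrr big_seq [leqRHS]big_seq /=.
  apply: leq_sum => A /size_subseqs_leq le_AP.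
  by rewrite (leq_trans (subset_cost_le A)) // leq_mul2l leq_mul2r ltnS le_AP !orbT.
have := expn_gt0 3 (wt P); rewrite step_timeE; nia.
Qed.

Lemma alg_time_le Ps : alg_time (run_alg Ps) <= 6 * \sum_(P <- Ps) (wt P).+1 * 3 ^ wt P.
Proof.
rewrite /alg_time /run_alg alg_time_foldl add0n big_distrr.
by apply: leq_sum => P _; exact: step_time_le.
Qed.

Lemma alg_keys_foldl s Ps :
  st_keys (foldl alg_step s Ps) = st_keys s ++ flatten [seq map key (subseqs P) | P <- Ps].
Proof.
elim: Ps s => [|P Ps IHPs] s /=; first by rewrite cats0.
by rewrite IHPs catA.
Qed.

Lemma sum_key_size_le P : \sum_(A <- subseqs P) (size (key A)).+1 <= (wt P).+1 * 2 ^ wt P.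
Proof.
rewrite mulnC -size_subseqs -sum_nat_const_seq big_seq [leqRHS]big_seq.
by apply: leq_sum => A /size_subseqs_leq le_AP; rewrite /key size_sort.
Qed.

Lemma alg_space_le Ps : alg_space (run_alg Ps) <= \sum_(P <- Ps) (wt P).+1 * 2 ^ wt P.
Proof.
rewrite /alg_space /run_alg alg_keys_foldl /=.
apply: (leq_trans (sum_undup_leq _ _)).
rewrite big_flatten big_map /=; apply: leq_sum => P _.
by rewrite big_map; exact: sum_key_size_le.
Qed.

Lemma sum_succn_mul_leq (T : Type) (s : seq T) (f : T -> nat) (F : nat -> nat) :
  \sum_(x <- s) (f x).+1 * F (f x) <= 2 * \sum_(x <- s) maxn 1 (f x) * F (f x).
Proof. by rewrite big_distrr; apply: leq_sum => x _; exact: succn_mul_leq_maxn1. Qed.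

Theorem theorem3 :
  exists C : nat,
  forall (n : nat) (Ps : seq spauli), all (wf_spauli n) Ps ->
    alg_time (run_alg Ps) <= C * \sum_(P <- Ps) maxn 1 (wt P) * 3 ^ wt P /\
    alg_space (run_alg Ps) <= C * \sum_(P <- Ps) maxn 1 (wt P) * 2 ^ wt P /\
    (forall k : nat, all (fun P => wt P <= k) Ps ->
       alg_time (run_alg Ps) <= C * (size Ps * (maxn 1 k * 3 ^ k)) /\
       alg_space (run_alg Ps) <= C * (size Ps * (maxn 1 k * 2 ^ k))).
Proof.
exists 12 => n Ps _.
have time_le : alg_time (run_alg Ps) <= 12 * \sum_(P <- Ps) maxn 1 (wt P) * 3 ^ wt P.
  apply: (leq_trans (alg_time_le Ps)).
  by rewrite -[12]/(6 * 2) -mulnA leq_mul2l (sum_succn_mul_leq _ _ (fun w => 3 ^ w)) orbT.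
have space_le : alg_space (run_alg Ps) <= 12 * \sum_(P <- Ps) maxn 1 (wt P) * 2 ^ wt P.
  apply: (leq_trans (alg_space_le Ps)).
  apply: (leq_trans (sum_succn_mul_leq _ _ (fun w => 2 ^ w))).
  by rewrite leq_mul2r orbT.
split=> //; split=> // k wt_le; split.
- apply: (leq_trans time_le); rewrite leq_mul2l.
  by rewrite (sum_homo_leq (@homo_maxn1_mul_exp 3 isT) wt_le) orbT.
- apply: (leq_trans space_le); rewrite leq_mul2l.
  by rewrite (sum_homo_leq (@homo_maxn1_mul_exp 2 isT) wt_le) orbT.
Qed.
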